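(* Let $\gamma\in\{0\}\cup(0,\infty)\cup\{\infty\}$. There exists a maximizer $(q^*,{\rho^1}^*,{\rho^2}^* )$ of the dual problem $$\sup_{q\in S^n_\infty,\ \rho^1,\rho^2\in[0,\gamma]^n}\ \sum_{x\in V}\min_{i\in I}\Big(C_i(x)+(\mathrm{div}_wq_i)(x)+\rho_i^2-\rho_i^1\Big)+\sum_{i=1}^n(\rho_i^1S_i^\ell-\rho_i^2S_i^u).$$ For $x\in V$ let $I_m(x)=\arg\min_{i\in I}\big(C_i(x)+(\mathrm{div}_wq_i^* )(x)+{\rho_i^2}^*-{\rho_i^1}^*\big)$. Then there exists a solution $u^*$ of the relaxed primal problem (the convex relaxed problem with size information determined by $\gamma$ as in the context) such that $(u^*;q^*,{\rho^1}^*,{\rho^2}^* )$ is a primal-dual pair, and at each $x\in V$ any such $u^*$ satisfies $\sum_{i\in I_m(x)}u_i^*(x)=1$ and $u_j^*(x)=0$ for $j\notin I_m(x)$. If $I_m(x)$ is a single index $\{i_0\}$ at the point $x$, then $u^*_{i_0}(x)=1$ and $u^*_i(x)=0$ for $i\ne i_0$. If $I_m(x)$ is a singleton at every $x\in V$, then this $u^*$ (given by the indicator formula) is an exact global binary minimizer of the original non-convex problem $\min_{u\in\mathcal{B}}$ of the same energy (with the same size penalty or constraints).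
   Context: Let $G=(V,E)$ be a finite undirected graph with symmetric weights $w(x,y)=w(y,x)>0$ for $\{x,y\}\in E$ and $w(x,y)=0$ otherwise. $TV_w(v)=\frac12\sum_{x,y\in V}w(x,y)|v(y)-v(x)|$ for $v:V\to\mathbb{R}$. For $\phi:V\times V\to\mathbb{R}$, $(\mathrm{div}_w\phi)(x)=\frac12\sum_{y\in V}w(x,y)(\phi(x,y)-\phi(y,x))$, $\|\phi\|_\infty=\max_{x,y}|\phi(x,y)|$, and $S^n_\infty=\{(q_1,\dots,q_n):q_i:V\times V\to\mathbb{R},\|q_i\|_\infty\le1\}$. Let $n\ge2$, $I=\{1,\dots,n\}$, $C_i:V\to\mathbb{R}$ given; $\|u_i\|=\sum_xu_i(x)$; $\mathcal{B}=\{u:V\to\{0,1\}^n:\sum_iu_i(x)=1\ \forall x\}$, $\mathcal{B}'=\{u:V\to[0,1]^n:\sum_iu_i(x)=1\ \forall x\}$. Size bounds are integers $0\le S_i^\ell\le S_i^u$ with $\sum_iS_i^\ell\le|V|\le\sum_iS_i^u$; for $0<\gamma<\infty$, $P_\gamma(t)=0$ if $S_i^\ell\le t\le S_i^u$, $\gamma(t-S_i^u)$ if $t>S_i^u$, $\gamma(S_i^\ell-t)$ if $t<S_i^\ell$; $[0,\infty]$ means $[0,\infty)$. The relaxed primal problem is $\min_{u\in\mathcal{B}'}\sum_i\sum_xC_i(x)u_i(x)+\sum_iTV_w(u_i)$, with no size terms if $\gamma=0$, with $\sum_iP_\gamma(\|u_i\|)$ added if $0<\gamma<\infty$, and under constraints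 $S_i^\ell\le\|u_i\|\le S_i^u$ if $\gamma=\infty$; the original problem is the same with $\mathcal{B}'$ replaced by $\mathcal{B}$. A primal-dual pair means a saddle point, with $u$ ranging over $\mathcal{B}'$ and $(q,\rho^1,\rho^2)$ over $S^n_\infty\times[0,\gamma]^n\times[0,\gamma]^n$, of $E(u;q,\rho^1,\rho^2)=\sum_{i}\sum_{x}u_i(x)\big(C_i(x)+(\mathrm{div}_wq_i)(x)+\rho_i^2-\rho_i^1\big)+\sum_i(\rho_i^1S_i^\ell-\rho_i^2S_i^u)$. *)

From HB Require Import structures.
From mathcomp Require Import all_boot all_order all_algebra.
From mathcomp Require Import reals.
Set Implicit Arguments. Unset Strict Implicit. Unset Printing Implicit Defensive.
Import Order.TTheory GRing.Theory Num.Theory.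
Local Open Scope ring_scope.

Inductive gam (R : Type) := GZero | GFin of R | GInf.
Arguments GZero {R}. Arguments GInf {R}.

Definition gam_ok (R : realType) (g : gam R) : Prop :=
  match g with GFin c => 0 < c | _ => True end.

Section Defs.
Variables (R : realType) (V : finType) (n : nat).
Variable (w : V -> V -> R).

Definition TVw (v : V -> R) : R :=
  2^-1 * \sum_(x : V) \sum_(y : V) w x y * `|v y - v x|.

Definition divw (phi : V -> V -> R) (x : V) : R :=
  2^-1 * \sum_(y : V) w x y * (phi x y - phi y x).

Definition usize (v : V -> R) : R := \sum_(x : V) v x.

Definition in_Bprime (u : 'I_n -> V -> R) : Prop :=
  forall x, (forall i, 0 <= u i x <= 1) /\ \sum_(i < n) u i x = 1.

Definition in_B (u : 'I_n -> V -> R) : Prop :=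
  forall x, (forall i, u i x = 0 \/ u i x = 1) /\ \sum_(i < n) u i x = 1.

Definition in_Sinf (q : 'I_n -> V -> V -> R) : Prop :=
  forall i x y, `|q i x y| <= 1.

(* rho in [0,gamma]^n, with [0,oo] meaning [0,oo) *)
Definition in_box (g : gam R) (rho : 'I_n -> R) : Prop :=
  forall i, 0 <= rho i /\
    match g with GZero => rho i <= 0 | GFin c => rho i <= c | GInf => True end.

Variables (C : 'I_n -> V -> R) (Sl Su : 'I_n -> nat).

Definition Pgam (c : R) (i : 'I_n) (t : R) : R :=
  if (Su i)%:R < t then c * (t - (Su i)%:R)
  else if t < (Sl i)%:R then c * ((Sl i)%:R - t) else 0.

Definition size_admissible (g : gam R) (u : 'I_n -> V -> R) : Prop :=
  match g with
  | GInf => forall i, (Sl i)%:R <= usize (u i) <= (Su i)%:R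
  | _ => True
  end.

(* primal energy (size term depends on gamma; for oo it is a constraint) *)
Definition primal_energy (g : gam R) (u : 'I_n -> V -> R) : R :=
  \sum_(i < n) \sum_(x : V) C i x * u i x + \sum_(i < n) TVw (u i) +
  match g with GFin c => \sum_(i < n) Pgam c i (usize (u i)) | _ => 0 end.

Definition relaxed_min (g : gam R) (u : 'I_n -> V -> R) : Prop :=
  in_Bprime u /\ size_admissible g u /\
  forall u', in_Bprime u' -> size_admissible g u' ->
    primal_energy g u <= primal_energy g u'.

Definition binary_min (g : gam R) (u : 'I_n -> V -> R) : Prop :=
  in_B u /\ size_admissible g u /\
  forall u', in_B u' -> size_admissible g u' ->
    primal_energy g u <= primal_energy g u'.

Definition coef (q : 'I_n -> V -> V -> R) (r1 r2 : 'I_n -> R) (i : 'I_n) (x : V) : R :=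
  C i x + divw (q i) x + r2 i - r1 i.

(* minimum over i in I of f i (I nonempty since n >= 2) *)
Definition minI (f : 'I_n -> R) : R :=
  \big[Num.min/head 0 [seq f i | i <- enum 'I_n]]_(i < n) f i.

Definition dual_obj (q : 'I_n -> V -> V -> R) (r1 r2 : 'I_n -> R) : R :=
  \sum_(x : V) minI (fun i => coef q r1 r2 i x) +
  \sum_(i < n) (r1 i * (Sl i)%:R - r2 i * (Su i)%:R).

Definition dual_feas (g : gam R) (q : 'I_n -> V -> V -> R) (r1 r2 : 'I_n -> R) : Prop :=
  in_Sinf q /\ in_box g r1 /\ in_box g r2.

Definition dual_max (g : gam R) (q : 'I_n -> V -> V -> R) (r1 r2 : 'I_n -> R) : Prop :=
  dual_feas g q r1 r2 /\
  forall q' r1' r2', dual_feas g q' r1' r2' -> dual_obj q' r1' r2' <= dual_obj q r1 r2.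

Definition Elag (u : 'I_n -> V -> R) (q : 'I_n -> V -> V -> R) (r1 r2 : 'I_n -> R) : R :=
  \sum_(i < n) \sum_(x : V) u i x * coef q r1 r2 i x +
  \sum_(i < n) (r1 i * (Sl i)%:R - r2 i * (Su i)%:R).

Definition primal_dual_pair (g : gam R) (u : 'I_n -> V -> R)
    (q : 'I_n -> V -> V -> R) (r1 r2 : 'I_n -> R) : Prop :=
  in_Bprime u /\ dual_feas g q r1 r2 /\
  (forall u', in_Bprime u' -> Elag u q r1 r2 <= Elag u' q r1 r2) /\
  (forall q' r1' r2', dual_feas g q' r1' r2' -> Elag u q' r1' r2' <= Elag u q r1 r2).

Definition Iargmin (q : 'I_n -> V -> V -> R) (r1 r2 : 'I_n -> R) (x : V) : {set 'I_n} :=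
  [set i | [forall j, coef q r1 r2 i x <= coef q r1 r2 j x]].

End Defs.

(* Weak duality: for |q| <= 1 one has sum_x u(x) div_w q(x) <= TV_w(u), so
   E(u; q, rho) is at most the primal energy, and the dual objective is the
   minimum of E(., q, rho) over B', attained at a labeling.  Strong duality is
   a finite linear-programming fact: after linearising TV_w and P_gamma with
   auxiliary variables, "some feasible u and (q, rho) have primal energy at
   most the dual objective" is a finite system of affine inequalities, which
   by a theorem of the alternative (Farkas' lemma, proved by Fourier-Motzkin
   elimination) is solvable as soon as every nonnegative combination of it is.
   A combination is solved by averaging the labelings it weights, taking
   q = sign(u(x) - u(y)) and for rho a subgradient of the size penalty.  A
   zero duality gap then forces u* to vanish off the argmin sets I_m(x)
   (complementary slackness), which gives all remaining claims. *)

From HB Require Import structures.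
From mathcomp Require Import all_boot all_order all_algebra.
From mathcomp Require Import reals.
From mathcomp Require Import ring lra.
From Stdlib Require Import Classical.
Set Implicit Arguments. Unset Strict Implicit. Unset Printing Implicit Defensive.
Import Order.TTheory GRing.Theory Num.Theory.
Local Open Scope ring_scope.

Section LinearInequalities.
Variable R : realFieldType.

Lemma sum_pred1_mul (I : finType) (c : I -> R) (i : I) : \sum_j (j == i)%:R * c j = c i.
Proof.
rewrite (bigD1 i) //= eqxx mul1r big1 ?addr0 // => j /negbTE ->; exact: mul0r.
Qed.

Lemma exists_between (I J : finType) (P : pred I) (Q : pred J) (L : I -> R) (U : J -> R) :
  (forall i j, P i -> Q j -> L i <= U j) ->
  exists t, (forall i, P i -> L i <= t) /\ (forall j, Q j -> t <= U j).
Proof.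
move=> LU; pose m := \big[Num.min/0]_(j | Q j) U j.
have mU j : Q j -> m <= U j by move=> Qj; rewrite /m (bigD1 j) //= ge_min lexx.
exists (\big[Num.max/m]_(i | P i) L i); split.
  by move=> i Pi; rewrite (bigD1 i) //= le_max lexx.
move=> j Qj; elim/big_ind: _ => [|x y hx hy|i Pi]; first exact: mU.
  by rewrite ge_max hx hy.
exact: LU.
Qed.

Lemma one_var_feasible (I : finType) (a c : I -> R) :
  (forall i, a i = 0 -> 0 <= c i) ->
  (forall p q, 0 < a p -> a q < 0 -> a q * c p <= a p * c q) ->
  exists t, forall i, a i * t <= c i.
Proof.
move=> zero_rows sign_pairs.
have [|t [lo hi]] := @exists_between I I (fun q => a q < 0) (fun p => 0 < a p)
    (fun q => c q / a q) (fun p => c p / a p).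
  move=> q p /= aq ap; rewrite ler_ndivrMr // mulrAC ler_pdivrMr //.
  by rewrite [c p * _]mulrC [c q * _]mulrC; apply: sign_pairs.
exists t => i; case: (ltgtP (a i) 0) => ai.
- by move: (lo i ai); rewrite ler_ndivrMr // mulrC.
- by move: (hi i ai); rewrite ler_pdivlMr // mulrC.
- by rewrite ai mul0r; apply: zero_rows.
Qed.

Lemma convex_interpolation (a b t : R) :
  a <= t <= b -> exists th, 0 <= th <= 1 /\ a + th * (b - a) = t.
Proof.
case/andP=> at_ tb; have [ab|] := ltP a b; last first.
  move=> ba; exists 0; split; first by rewrite lexx ler01.
  by rewrite mul0r addr0; apply/le_anti; rewrite at_ (le_trans tb).
exists ((t - a) / (b - a)); rewrite divr_ge0 ?subr_ge0 ?ler_pdivrMr ?subr_gt0 ?(ltW ab) //=.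
by rewrite mul1r lerB // divfK ?subr_eq0 ?gt_eqF // addrC subrK.
Qed.

Section Elimination.
Variables (I : finType) (a : I -> R).

(* Rows of the Fourier--Motzkin elimination of a variable with coefficient
   column [a]: rows with [a i = 0] are kept, and each pair of rows with
   coefficients of opposite signs is combined so that the variable cancels. *)
Definition fm_coef (k : I + I * I) (i : I) : R :=
  match k with
  | inl j => (a j == 0)%:R * (i == j)%:R
  | inr (p, q) => ((0 < a p) && (a q < 0))%:R * (- a q * (i == p)%:R + a p * (i == q)%:R)
  end.

Definition fm_comb (c : I -> R) (k : I + I * I) : R := \sum_i fm_coef k i * c i.

Lemma fm_coef_ge0 k i : 0 <= fm_coef k i.
Proof.
case: k => [j|[p q]] /=; first by rewrite mulr_ge0 ?ler0n.
have [/andP [ap aq]|] := boolP ((0 < a p) && (a q < 0)); last by rewrite mul0r.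
by rewrite mul1r addr_ge0 // mulr_ge0 ?ler0n // ?oppr_ge0 ltW.
Qed.

Lemma fm_comb_inl c j : fm_comb c (inl j) = (a j == 0)%:R * c j.
Proof. by rewrite /fm_comb; under eq_bigr do rewrite -mulrA; rewrite -mulr_sumr sum_pred1_mul. Qed.

Lemma fm_comb_inr c p q :
  fm_comb c (inr (p, q)) = ((0 < a p) && (a q < 0))%:R * (- a q * c p + a p * c q).
Proof.
rewrite /fm_comb; under eq_bigr do rewrite -mulrA mulrDl -!mulrA.
by rewrite -mulr_sumr big_split /= -!mulr_sumr !sum_pred1_mul.
Qed.

Lemma fm_comb_eliminated k : fm_comb a k = 0.
Proof.
case: k => [j|[p q]]; last by rewrite fm_comb_inr [a p * a q]mulrC mulNr addNr mulr0.
by rewrite fm_comb_inl; case: eqP => [->|]; rewrite ?mulr0 ?mul0r.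
Qed.

Lemma fm_comb_lincomb (J : finType) (c : J -> I -> R) (v : J -> R) k :
  \sum_j fm_comb (c j) k * v j = fm_comb (fun i => \sum_j c j i * v j) k.
Proof.
rewrite /fm_comb; under eq_bigr do rewrite mulr_suml.
rewrite exchange_big; apply: eq_bigr => i _; rewrite mulr_sumr.
by apply: eq_bigr => j _; rewrite mulrA.
Qed.

Lemma fm_comb_transpose (y : I + I * I -> R) (c : I -> R) :
  \sum_i (\sum_k y k * fm_coef k i) * c i = \sum_k y k * fm_comb c k.
Proof.
under eq_bigr do rewrite mulr_suml.
rewrite exchange_big; apply: eq_bigr => k _; rewrite mulr_sumr.
by apply: eq_bigr => i _; rewrite mulrA.
Qed.

Lemma fm_combB (c d : I -> R) k : fm_comb (fun i => c i - d i) k = fm_comb c k - fm_comb d k.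
Proof. by rewrite /fm_comb -sumrB; apply: eq_bigr => i _; rewrite mulrBr. Qed.

Lemma fm_comb_shift (c : I -> R) s k : fm_comb (fun i => a i * s + c i) k = fm_comb c k.
Proof.
rewrite /fm_comb; under eq_bigr do rewrite mulrDr mulrA.
by rewrite big_split /= -mulr_suml -/(fm_comb a k) fm_comb_eliminated mul0r add0r.
Qed.

Lemma fm_comb_lift (c : I -> R) :
  (forall k, 0 <= fm_comb c k) -> exists t, forall i, a i * t <= c i.
Proof.
move=> comb_ge0; apply: one_var_feasible => [i ai|p q ap aq].
  by move: (comb_ge0 (inl i)); rewrite fm_comb_inl ai eqxx mul1r.
by move: (comb_ge0 (inr (p, q))); rewrite fm_comb_inr ap aq mul1r; lra.
Qed.

End Elimination.

Lemma fm_elim_infeasible (X I : finType) (A : I -> X -> R) (b : I -> R) (x0 : X) :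
  (forall z : X -> R, exists i, b i < \sum_x A i x * z x) ->
  forall z : X -> R, exists k,
    fm_comb (A ^~ x0) b k < \sum_x fm_comb (A ^~ x0) (A ^~ x) k * z x.
Proof.
move=> infeasible v; apply/existsP; apply: contraT; rewrite negb_exists => /forallP feasible.
pose a i := A i x0; pose rest i := \sum_x A i x * (if x == x0 then 0 else v x).
have split_x0 i t : \sum_x A i x * (if x == x0 then t else v x) = a i * t + rest i.
  rewrite /rest (bigD1 x0) //= eqxx [in RHS](bigD1 x0) //= eqxx mulr0 add0r.
  by congr (_ + _); apply: eq_bigr => x /negbTE ->.
have reduced k : 0 <= fm_comb a (fun i => b i - rest i) k.
  rewrite fm_combB subr_ge0 -(@fm_comb_shift _ a rest (v x0)).
  have -> : fm_comb a (fun i => a i * v x0 + rest i) k =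
      \sum_x fm_comb a (A ^~ x) k * v x.
    rewrite fm_comb_lincomb; apply: eq_bigr => i _; rewrite -split_x0; congr (_ * _).
    by apply: eq_bigr => x _; case: eqP => [->|].
  by rewrite leNgt feasible.
have [t ht] := fm_comb_lift reduced.
have [i] := infeasible (fun x => if x == x0 then t else v x).
by rewrite split_x0; move: (ht i); lra.
Qed.

(* By induction on the support [S] of the columns: the certificate of the
   system with one variable eliminated pulls back through [fm_coef]. *)
Lemma farkas_on (X : finType) (S : {set X}) (I : finType) (A : I -> X -> R) (b : I -> R) :
  (forall i x, x \notin S -> A i x = 0) ->
  (forall z : X -> R, exists i, b i < \sum_x A i x * z x) ->
  exists y : I -> R,
    [/\ forall i, 0 <= y i, forall x, \sum_i y i * A i x = 0 & \sum_i y i * b i < 0].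
Proof.
have [N] := ubnP #|S|; elim: N S I A b => // N IH S I A b cardS A0 infeasible.
have [S0 | [x0 x0S]] := set_0Vmem S.
  have [i bi] := infeasible (fun _ => 0).
  exists (fun j => (j == i)%:R); split => [j|x|]; rewrite ?ler0n ?sum_pred1_mul //.
    by rewrite A0 // S0 in_set0.
  by move: bi; rewrite big1 // => x _; rewrite mulr0.
have [|||y' [y'0 y'A y'b]] := IH (S :\ x0) _ (fun k x => fm_comb (A ^~ x0) (A ^~ x) k)
    (fm_comb (A ^~ x0) b).
- by move: cardS; rewrite (cardsD1 x0) x0S.
- move=> k x; rewrite in_setD1 negb_and negbK => /orP [/eqP ->|xS].
    exact: fm_comb_eliminated.
  by rewrite /fm_comb big1 // => i _; rewrite A0 // mulr0.
- exact: fm_elim_infeasible.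
exists (fun i => \sum_k y' k * fm_coef (A ^~ x0) k i); split.
- by move=> i; apply: sumr_ge0 => k _; rewrite mulr_ge0 ?fm_coef_ge0.
- by move=> x; rewrite fm_comb_transpose; apply: y'A.
- by rewrite fm_comb_transpose.
Qed.

Section Affine.
Variable X : finType.
Implicit Types F G : (X -> R) -> R.

Definition affine F := exists p : (X -> R) * R, forall z, F z = \sum_x p.1 x * z x + p.2.

Lemma affine_cst c : affine (fun _ => c).
Proof. by exists (fun _ => 0, c) => z /=; rewrite big1 ?add0r // => x _; rewrite mul0r. Qed.

Lemma affine_coord x0 : affine (fun z => z x0).
Proof. by exists (fun x => (x == x0)%:R, 0) => z /=; rewrite sum_pred1_mul addr0. Qed.

Lemma affine_ext F G : F =1 G -> affine F -> affine G.
Proof. by move=> FG [p Fp]; exists p => z; rewrite -FG. Qed.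

Lemma affineD F G : affine F -> affine G -> affine (fun z => F z + G z).
Proof.
move=> [p Fp] [q Gq]; exists (fun x => p.1 x + q.1 x, p.2 + q.2) => z /=.
by rewrite Fp Gq; under eq_bigr do rewrite mulrDl; rewrite big_split /=; ring.
Qed.

Lemma affineMl c F : affine F -> affine (fun z => c * F z).
Proof.
move=> [p Fp]; exists (fun x => c * p.1 x, c * p.2) => z /=.
by rewrite Fp mulrDr mulr_sumr; congr (_ + _); apply: eq_bigr => x _; rewrite mulrA.
Qed.

Lemma affineMr c F : affine F -> affine (fun z => F z * c).
Proof. by move=> /(affineMl c); apply: affine_ext => z; rewrite mulrC. Qed.

Lemma affineN F : affine F -> affine (fun z => - F z).
Proof. by move=> /(affineMl (-1)); apply: affine_ext => z; rewrite mulN1r. Qed.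

Lemma affineB F G : affine F -> affine G -> affine (fun z => F z - G z).
Proof. by move=> aF /affineN; apply: affineD. Qed.

Lemma affine_sum (J : finType) (F : J -> (X -> R) -> R) :
  (forall j, affine (F j)) -> affine (fun z => \sum_j F j z).
Proof.
move=> /fin_all_exists [p Fp].
exists (fun x => \sum_j (p j).1 x, \sum_j (p j).2) => z /=.
under eq_bigr do rewrite Fp.
rewrite big_split /= exchange_big /=; congr (_ + _).
by apply: eq_bigr => x _; rewrite mulr_suml.
Qed.

(* Farkas' lemma for the joint system [F, G]: the [F]-part of a certificate
   of infeasibility is a combination [lam] contradicting the hypothesis. *)
Lemma affine_alternative (I K : finType) (F : I -> (X -> R) -> R) (G : K -> (X -> R) -> R) :
  (forall i, affine (F i)) -> (forall k, affine (G k)) ->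
  (forall lam : I -> R, (forall i, 0 <= lam i) ->
     exists z, (forall k, G k z <= 0) /\ \sum_i lam i * F i z <= 0) ->
  exists z, (forall k, G k z <= 0) /\ (forall i, F i z <= 0).
Proof.
move=> aF aG comb_solvable; apply: NNPP => unsolvable.
pose H (r : I + K) z := match r with inl i => F i z | inr k => G k z end.
have /fin_all_exists [p Hp] : forall r, affine (H r) by case=> [i|k]; [exact: aF | exact: aG].
have infeasible (z : X -> R) : exists r, - (p r).2 < \sum_x (p r).1 x * z x.
  have [/existsP [r Hr]|] := boolP [exists r, 0 < H r z].
    by exists r; rewrite -subr_gt0 opprK -Hp.
  rewrite negb_exists => /forallP Hz; case: unsolvable; exists z.
  by split=> [k|i]; rewrite leNgt; [exact: (Hz (inr k)) | exact: (Hz (inl i))].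
have [|y [y0 yA yb]] :=
  @farkas_on X setT _ (fun r x => (p r).1 x) (fun r => - (p r).2) _ infeasible.
  by move=> r x; rewrite in_setT.
have combH z : \sum_r y r * H r z = - \sum_r y r * - (p r).2.
  under eq_bigr do rewrite Hp mulrDr mulr_sumr.
  rewrite big_split /= exchange_big /= big1 ?add0r.
    by rewrite -sumrN; apply: eq_bigr => r _; rewrite mulrN opprK.
  by move=> x _; under eq_bigr do rewrite mulrA; rewrite -mulr_suml yA mul0r.
have [z [Gz Fz]] := comb_solvable (fun i => y (inl i)) (fun i => y0 (inl i)).
have : 0 < \sum_r y r * H r z by rewrite combH oppr_gt0.
rewrite big_sumType /=; apply/negP; rewrite -leNgt -[X in _ <= X](addr0 0) lerD //.
by apply: sumr_le0 => k _; rewrite mulr_ge0_le0.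
Qed.

End Affine.
End LinearInequalities.

Section Relaxation.
Variables (R : realType) (V : finType) (n : nat) (w : V -> V -> R) (C : 'I_n -> V -> R).
Variables (Sl Su : 'I_n -> nat) (g : gam R).
Hypotheses (wsym : forall x y, w x y = w y x) (wpos : forall x y, 0 <= w x y).
Hypothesis hS : forall i, (Sl i <= Su i)%N.
Hypothesis n_gt0 : (0 < n)%N.

Local Notation lag := (Elag w C Sl Su).
Local Notation dual := (dual_obj w C Sl Su).
Local Notation energy := (primal_energy w C Sl Su g).

Lemma minI_le (f : 'I_n -> R) i : minI f <= f i.
Proof. by rewrite /minI (bigD1 i) //= ge_min lexx. Qed.

Lemma minI_attained (f : 'I_n -> R) : exists i, minI f = f i.
Proof.
rewrite /minI; elim/big_ind: _ => [|x y [i ->] [j ->]|i _]; last by exists i.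
  case E: (enum 'I_n) => [|i s] /=; last by exists i.
  by exfalso; move: n_gt0; rewrite -(size_enum_ord n) E.
by rewrite /Num.min; case: ifP => _; [exists i | exists j].
Qed.

(* [size_excess false] and [size_excess true] are the violations of the lower
   and upper size bounds; they go with [rho^1] and [rho^2] respectively. *)
Definition size_excess (b : bool) (i : 'I_n) (t : R) : R :=
  if b then t - (Su i)%:R else (Sl i)%:R - t.

Definition pen_weight : R := if g is GFin c then c else 0.

Lemma Pgam_max c i t :
  Pgam Sl Su c i t = c * \sum_(b : bool) Num.max (size_excess b i t) 0.
Proof.
have SlSu : (Sl i)%:R <= (Su i)%:R :> R by rewrite ler_nat.
rewrite /Pgam big_bool /size_excess /=.
case: ltP => [up|up]; first by rewrite (max_l (ltW _)) ?subr_gt0 // max_r; lra.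
rewrite [Num.max (_ - _) 0]max_r ?subr_le0 // add0r.
by case: ltP => lo; [rewrite max_l // subr_ge0 ltW | rewrite max_r ?mulr0 // subr_le0].
Qed.

Lemma primal_energyE u : energy u =
  \sum_i \sum_x C i x * u i x + \sum_i TVw w (u i) +
  pen_weight * \sum_i \sum_(b : bool) Num.max (size_excess b i (usize (u i))) 0.
Proof.
rewrite /primal_energy /pen_weight; case: g => [|c|]; rewrite ?mul0r // mulr_sumr.
by congr (_ + _); apply: eq_bigr => i _; rewrite Pgam_max.
Qed.

Lemma Elag_decomp u q r1 r2 : lag u q r1 r2 =
  \sum_i \sum_x C i x * u i x + \sum_i \sum_x u i x * divw w (q i) x +
  \sum_i \sum_(b : bool) (if b then r2 i else r1 i) * size_excess b i (usize (u i)).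
Proof.
rewrite /Elag -!big_split /=; apply: eq_bigr => i _.
rewrite big_bool /size_excess /usize /=.
have -> : \sum_x u i x * coef w C q r1 r2 i x = \sum_x C i x * u i x +
    \sum_x u i x * divw w (q i) x + (r2 i - r1 i) * \sum_x u i x.
  by rewrite mulr_sumr -!big_split /=; apply: eq_bigr => x _; rewrite /coef; ring.
ring.
Qed.

(* Summation by parts on the graph. *)
Lemma sum_mul_divw (v : V -> R) phi :
  \sum_x v x * divw w phi x = 2^-1 * \sum_x \sum_y w x y * (phi x y * (v x - v y)).
Proof.
rewrite /divw.
have -> : \sum_x v x * (2^-1 * \sum_y w x y * (phi x y - phi y x)) = 2^-1 *
    (\sum_x \sum_y w x y * phi x y * v x - \sum_x \sum_y w x y * phi y x * v x).
  rewrite -sumrB mulr_sumr; apply: eq_bigr => x _; rewrite -sumrB mulrCA mulr_sumr.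
  by congr (_ * _); apply: eq_bigr => y _; ring.
have -> : \sum_x \sum_y w x y * phi y x * v x = \sum_x \sum_y w x y * phi x y * v y.
  by rewrite exchange_big; apply: eq_bigr => x _; apply: eq_bigr => y _; rewrite wsym.
congr (_ * _); rewrite -sumrB; apply: eq_bigr => x _.
by rewrite -sumrB; apply: eq_bigr => y _; ring.
Qed.

Lemma sum_mul_divw_le_TV (v : V -> R) phi :
  (forall x y, `|phi x y| <= 1) -> \sum_x v x * divw w phi x <= TVw w v.
Proof.
move=> phi1; rewrite sum_mul_divw /TVw ler_wpM2l ?invr_ge0 ?ler0n //.
apply: ler_sum => x _; apply: ler_sum => y _; apply: ler_wpM2l => //.
by apply: le_trans (ler_norm _) _; rewrite normrM distrC ler_piMl.
Qed.

Definition tv_sign (v : V -> R) (x y : V) : R := if v y <= v x then 1 else -1.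

Lemma sum_mul_divw_tv_sign (v : V -> R) : \sum_x v x * divw w (tv_sign v) x = TVw w v.
Proof.
rewrite sum_mul_divw /TVw; congr (_ * _); apply: eq_bigr => x _; apply: eq_bigr => y _.
congr (_ * _); rewrite /tv_sign distrC; case: ifP => vyx.
  by rewrite mul1r ger0_norm // subr_ge0.
by rewrite mulN1r ltr0_norm ?opprK // subr_lt0 ltNge vyx.
Qed.

Lemma mul_le_pos_part (r c e : R) : 0 <= r <= c -> r * e <= c * Num.max e 0.
Proof.
case/andP=> r0 rc; case: (leP e 0) => e0; first by rewrite mulr0 mulr_ge0_le0.
by rewrite ler_pM2r.
Qed.

Lemma size_term_le (u : 'I_n -> V -> R) r1 r2 :
  size_admissible Sl Su g u -> in_box g r1 -> in_box g r2 ->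
  \sum_i \sum_(b : bool) (if b then r2 i else r1 i) * size_excess b i (usize (u i)) <=
  pen_weight * \sum_i \sum_(b : bool) Num.max (size_excess b i (usize (u i))) 0.
Proof.
rewrite /pen_weight mulr_sumr => adm box1 box2.
apply: ler_sum => i _; rewrite mulr_sumr; apply: ler_sum => b _.
have box : in_box g (fun i => if b then r2 i else r1 i) by case: b.
have [/= r0 rg] := box i.
move: adm rg; rewrite /size_admissible; case: g => [|c|] adm /= rg.
- have -> : (if b then r2 i else r1 i) = 0 by apply: le_anti; rewrite rg r0.
  by rewrite !mul0r.
- by apply: mul_le_pos_part; rewrite r0 rg.
- rewrite mul0r mulr_ge0_le0 // /size_excess.
  by have /andP [lo up] := adm i; case: b {box r0 rg}; rewrite subr_le0.
Qed.

Lemma Elag_le_energy (u : 'I_n -> V -> R) q r1 r2 :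
  size_admissible Sl Su g u -> dual_feas g q r1 r2 -> lag u q r1 r2 <= energy u.
Proof.
move=> adm [q1 [box1 box2]]; rewrite Elag_decomp primal_energyE lerD ?size_term_le //.
by rewrite lerD2l; apply: ler_sum => i _; apply: sum_mul_divw_le_TV.
Qed.

Lemma in_Bprime_of (u : 'I_n -> V -> R) :
  (forall i x, 0 <= u i x) -> (forall x, \sum_i u i x = 1) -> in_Bprime u.
Proof.
move=> u0 u1 x; split => // i; rewrite u0 -(u1 x) (bigD1 i) //= lerDl.
exact: sumr_ge0.
Qed.

Definition label_indicator (s : {ffun V -> 'I_n}) (i : 'I_n) (x : V) : R := (s x == i)%:R.

Lemma label_indicator_Bprime s : in_Bprime (label_indicator s).
Proof.
apply: in_Bprime_of => [i x|x]; first exact: ler0n.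
by rewrite -[RHS](sum_pred1_mul (fun=> 1) (s x)); apply: eq_bigr => i _; rewrite mulr1 eq_sym.
Qed.

Lemma dual_obj_le_Elag u q r1 r2 : in_Bprime u -> dual q r1 r2 <= lag u q r1 r2.
Proof.
move=> uB; rewrite /dual_obj /Elag lerD2r exchange_big /=.
apply: ler_sum => x _; have [u01 u1] := uB x.
rewrite -[minI _]mul1r -u1 mulr_suml; apply: ler_sum => i _.
by apply: ler_wpM2l; [case/andP: (u01 i) | apply: minI_le].
Qed.

Lemma dual_obj_attained q r1 r2 :
  exists s, lag (label_indicator s) q r1 r2 = dual q r1 r2.
Proof.
pose m x := minI (fun i => coef w C q r1 r2 i x).
have /fin_all_exists [s sm] x : exists i, m x = coef w C q r1 r2 i x by apply: minI_attained.
exists [ffun x => s x]; rewrite /Elag /dual_obj exchange_big /=; congr (_ + _).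
apply: eq_bigr => x _; rewrite -/(m x) sm -(sum_pred1_mul (coef w C q r1 r2 ^~ x)).
by apply: eq_bigr => i _; rewrite /label_indicator ffunE eq_sym.
Qed.

Lemma weak_duality u q r1 r2 : in_Bprime u -> size_admissible Sl Su g u ->
  dual_feas g q r1 r2 -> dual q r1 r2 <= energy u.
Proof.
by move=> uB adm feas; apply: le_trans (dual_obj_le_Elag _ _ _ uB) (Elag_le_energy adm feas).
Qed.

(* The gap [lag u - dual] is the sum of the nonnegative terms
   [u_i(x) (coef_i(x) - min_j coef_j(x))]. *)
Lemma Elag_le_dual_obj_support u q r1 r2 : in_Bprime u ->
  lag u q r1 r2 <= dual q r1 r2 ->
  forall x j, j \notin Iargmin w C q r1 r2 x -> u j x = 0.
Proof.
move=> uB gap x j; pose c i y := coef w C q r1 r2 i y; pose m y := minI (c ^~ y).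
have gapE : lag u q r1 r2 - dual q r1 r2 = \sum_y \sum_i u i y * (c i y - m y).
  rewrite /Elag /dual_obj opprD addrACA subrr addr0 exchange_big -sumrB /=.
  apply: eq_bigr => y _; under [RHS]eq_bigr do rewrite mulrBr.
  by rewrite sumrB -mulr_suml (uB y).2 mul1r.
have term_ge0 y i : 0 <= u i y * (c i y - m y).
  by rewrite mulr_ge0 ?subr_ge0 ?minI_le //; case/andP: ((uB y).1 i).
have /eqP sum0 : \sum_y \sum_i u i y * (c i y - m y) == 0.
  rewrite eq_le -{1}gapE subr_le0 gap /=.
  by apply: sumr_ge0 => y _; apply: sumr_ge0.
have sum0x : \sum_i u i x * (c i x - m x) = 0.
  by apply: (psumr_eq0P _ sum0) => // y _; apply: sumr_ge0.
have /eqP : u j x * (c j x - m x) = 0 by apply: (psumr_eq0P _ sum0x).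
rewrite mulf_eq0 subr_eq0 => /orP [/eqP //|/eqP cjm].
rewrite inE negb_forall => /existsP [k]; rewrite -ltNge -/(c j x) cjm.
by move=> /lt_le_trans /(_ (minI_le _ k)); rewrite ltxx.
Qed.

Lemma zero_gap_optimal u q r1 r2 : in_Bprime u -> size_admissible Sl Su g u ->
  dual_feas g q r1 r2 -> energy u <= dual q r1 r2 ->
  relaxed_min w C Sl Su g u /\ primal_dual_pair w C Sl Su g u q r1 r2.
Proof.
move=> uB adm feas gap.
have energy_le_lag u' : in_Bprime u' -> energy u <= lag u' q r1 r2.
  by move=> u'B; apply: le_trans gap (dual_obj_le_Elag _ _ _ u'B).
do !split=> //.
- by move=> u' u'B adm'; apply: le_trans gap (weak_duality u'B adm' feas).
- by move=> u' u'B; apply: le_trans (Elag_le_energy adm feas) (energy_le_lag _ u'B).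
- by move=> q' r1' r2' feas'; apply: le_trans (Elag_le_energy adm feas') (energy_le_lag _ uB).
Qed.

Lemma primal_dual_pair_support u q r1 r2 :
  primal_dual_pair w C Sl Su g u q r1 r2 ->
  forall x j, j \notin Iargmin w C q r1 r2 x -> u j x = 0.
Proof.
move=> [uB [_ [u_min _]]]; have [s sE] := dual_obj_attained q r1 r2.
apply: Elag_le_dual_obj_support => //; rewrite -sE.
exact/u_min/label_indicator_Bprime.
Qed.

Lemma sum_support (u : 'I_n -> V -> R) (A : {set 'I_n}) x : in_Bprime u ->
  (forall j, j \notin A -> u j x = 0) -> \sum_(i in A) u i x = 1.
Proof.
by move=> uB uA; rewrite -(uB x).2 [RHS](bigID (mem A)) /= [X in _ = _ + X]big1 ?addr0.
Qed.

Lemma point_support (u : 'I_n -> V -> R) x i0 : in_Bprime u ->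
  (forall j, j != i0 -> u j x = 0) -> u i0 x = 1.
Proof.
move=> uB u0; rewrite -(@sum_support u [set i0] x uB) ?big_set1 // => j.
by rewrite in_set1; apply: u0.
Qed.

Lemma in_B_of_point_support (u : 'I_n -> V -> R) : in_Bprime u ->
  (forall x, exists i0, forall j, j != i0 -> u j x = 0) -> in_B u.
Proof.
move=> uB point x; have [i0 u0] := point x; split => [i|]; last exact: (uB x).2.
by case: (eqVneq i i0) => [->|/u0]; [right; apply: point_support | left].
Qed.

Lemma binary_min_of_relaxed_min u :
  relaxed_min w C Sl Su g u -> in_B u -> binary_min w C Sl Su g u.
Proof.
move=> [_ [adm u_min]] uB; split=> //; split=> // u' u'B adm'; apply: u_min adm'.
by move=> x; have [u'01 u'1] := u'B x; split=> // i; case: (u'01 i) => ->; rewrite ?lexx ?ler01.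
Qed.

Hypothesis hV : (\sum_(i < n) Sl i <= #|V| <= \sum_(i < n) Su i)%N.
Hypothesis hg : gam_ok g.

Lemma pen_weight_ge0 : 0 <= pen_weight.
Proof. by move: hg; rewrite /pen_weight; case: g => // c /ltW. Qed.

Definition hard_size : R := if g is GInf then 1 else 0.

Definition box_excess (r : R) : R := if g is GInf then 0 else r - pen_weight.

Lemma in_box_excess (r : 'I_n -> R) :
  in_box g r <-> forall i, 0 <= r i /\ box_excess (r i) <= 0.
Proof.
rewrite /in_box /box_excess /pen_weight.
case: g => [|c|]; split=> box i; have [r0 rg] := box i; split=> //.
all: move: rg; by rewrite ?subr0 ?subr_le0.
Qed.

Definition signed (b : bool) (e : R) : R := if b then e else - e.

Lemma signed_le_norm (e c : R) : (forall b, signed b e <= c) <-> `|e| <= c.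
Proof.
rewrite ler_norml lerNl; split => [le_c|/andP [? ?] []] //.
by rewrite (le_c true) (le_c false).
Qed.

(* Unknowns of a linear program coupling the relaxed primal and the dual
   problem: [u], the dual field [q], bounds [t] for [|u_i(y) - u_i(x)|], the
   multipliers [rho^b] and bounds [p^b] for the positive parts of the size
   violations ([b = false]: lower bound, [b = true]: upper bound). *)
Definition lp_var := ('I_n * V + 'I_n * V * V + 'I_n * V * V + 'I_n * bool + 'I_n * bool)%type.

Definition u_of (z : lp_var -> R) i x := z (inl (inl (inl (inl (i, x))))).
Definition q_of (z : lp_var -> R) i x y := z (inl (inl (inl (inr (i, x, y))))).
Definition t_of (z : lp_var -> R) i x y := z (inl (inl (inr (i, x, y)))).
Definition rho_of (z : lp_var -> R) b i := z (inl (inr (i, b))).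
Definition p_of (z : lp_var -> R) i b := z (inr (i, b)).

Definition lp_point (u : 'I_n -> V -> R) q (r1 r2 : 'I_n -> R) (v : lp_var) : R :=
  match v with
  | inl (inl (inl (inl (i, x)))) => u i x
  | inl (inl (inl (inr (i, x, y)))) => q i x y
  | inl (inl (inr (i, x, y))) => `|u i y - u i x|
  | inl (inr (i, b)) => if b then r2 i else r1 i
  | inr (i, b) => Num.max (size_excess b i (usize (u i))) 0
  end.

Definition lp_obj (z : lp_var -> R) : R :=
  \sum_i \sum_x C i x * u_of z i x + \sum_i 2^-1 * (\sum_x \sum_y w x y * t_of z i x y) +
  pen_weight * \sum_i \sum_(b : bool) p_of z i b.

Definition lp_row := ('I_n * V + V * bool + 'I_n * V * V * bool + 'I_n * V * V * bool +
  'I_n * bool * bool + 'I_n * bool * bool)%type.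

(* The constraints [lp_ineq k z <= 0] say that [u_of z] is in [B'], that the
   dual variables are feasible, and that [t] and [p] dominate what they bound. *)
Definition lp_ineq (k : lp_row) (z : lp_var -> R) : R :=
  match k with
  | inl (inl (inl (inl (inl (i, x))))) => - u_of z i x
  | inl (inl (inl (inl (inr (x, b))))) => signed b (\sum_i u_of z i x - 1)
  | inl (inl (inl (inr (i, x, y, b)))) => signed b (q_of z i x y) - 1
  | inl (inl (inr (i, x, y, b))) => signed b (u_of z i y - u_of z i x) - t_of z i x y
  | inl (inr (i, b, c)) => if c then box_excess (rho_of z b i) else - rho_of z b i
  | inr (i, b, c) => (if c then size_excess b i (usize (u_of z i)) else 0) - p_of z i b
  end.

(* [lp_gap_row k z <= 0] for all [k] says that the linearised primal energy is
   at most [lag] at every labeling, hence at most the dual objective, and, for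
   [gamma = oo], that [u_of z] meets the size constraints. *)
Definition lp_gap_row (k : {ffun V -> 'I_n} + 'I_n * bool) (z : lp_var -> R) : R :=
  match k with
  | inl s => lp_obj z - lag (label_indicator s) (q_of z) (rho_of z false) (rho_of z true)
  | inr (i, b) => hard_size * size_excess b i (usize (u_of z i))
  end.

Ltac affine_tac := repeat first
  [ apply: affine_cst | apply: affine_coord | apply: affineD | apply: affineB | apply: affineN
  | apply: affineMl | apply: affineMr | apply: affine_sum => ? ].

Lemma lp_ineq_affine k : affine (lp_ineq k).
Proof.
rewrite /lp_ineq /signed /box_excess /size_excess /usize /u_of /q_of /t_of /rho_of /p_of.
case: k => [[[[[[i x]|[x b]]|[[[i x] y] b]]|[[[i x] y] b]]|[[i b] c]]|[[i b] c]];
  try case: b; try case: c; case: g => [|?|]; affine_tac.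
Qed.

Lemma lp_gap_row_affine k : affine (lp_gap_row k).
Proof.
rewrite /lp_gap_row /lp_obj /Elag /coef /divw /size_excess /usize.
rewrite /u_of /q_of /t_of /rho_of /p_of.
by case: k => [s|[i []]]; affine_tac.
Qed.

Lemma dual_feas0 : dual_feas g (fun (_ : 'I_n) (_ _ : V) => 0) (fun _ => 0) (fun _ => 0).
Proof.
have box0 : in_box g (fun _ : 'I_n => 0).
  apply/in_box_excess => i; split=> //; rewrite /box_excess.
  by case: g; rewrite ?sub0r ?oppr_le0 ?pen_weight_ge0.
by split=> [i x y|]; rewrite ?normr0 ?ler01.
Qed.

Lemma lp_ineq_sound z : (forall k, lp_ineq k z <= 0) ->
  [/\ in_Bprime (u_of z), dual_feas g (q_of z) (rho_of z false) (rho_of z true),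
      forall i x y, `|u_of z i y - u_of z i x| <= t_of z i x y &
      forall i b, Num.max (size_excess b i (usize (u_of z i))) 0 <= p_of z i b].
Proof.
have box b : (forall i, lp_ineq (inl (inr (i, b, false))) z <= 0) ->
    (forall i, lp_ineq (inl (inr (i, b, true))) z <= 0) -> in_box g (rho_of z b).
  by move=> r0 rg; apply/in_box_excess => i; rewrite -oppr_le0 (r0 i) (rg i).
move=> ineq; split.
- apply: in_Bprime_of => [i x|x].
    by rewrite -oppr_le0; apply: (ineq (inl (inl (inl (inl (inl (i, x))))))).
  apply/eqP; rewrite -subr_eq0 -normr_le0; apply/signed_le_norm => b.
  exact: (ineq (inl (inl (inl (inl (inr (x, b))))))).
- split; last by split; apply: box => i; apply: ineq.
  move=> i x y; apply/signed_le_norm => b; rewrite -subr_le0.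
  exact: (ineq (inl (inl (inl (inr (i, x, y, b)))))).
- move=> i x y; apply/signed_le_norm => b; rewrite -subr_le0.
  exact: (ineq (inl (inl (inr (i, x, y, b))))).
- move=> i b; rewrite ge_max -oppr_le0 -subr_le0.
  have := ineq (inr (i, b, false)); have := ineq (inr (i, b, true)).
  by rewrite /= sub0r => -> ->.
Qed.

Lemma lp_point_ineq u q r1 r2 : in_Bprime u -> dual_feas g q r1 r2 ->
  forall k, lp_ineq k (lp_point u q r1 r2) <= 0.
Proof.
move=> uB [q1 [box1 box2]].
case=> [[[[[[i x]|[x b]]|[[[i x] y] b]]|[[[i x] y] b]]|[[i b] c]]|[[i b] c]];
  rewrite /= /u_of /q_of /t_of /rho_of /p_of /=.
- by rewrite oppr_le0; case/andP: ((uB x).1 i).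
- by rewrite (uB x).2 subrr; case: b; rewrite /signed ?oppr0.
- by rewrite subr_le0; move: b; apply/signed_le_norm.
- by rewrite subr_le0; move: b; apply/signed_le_norm.
- have /in_box_excess box : in_box g (if b then r2 else r1) by case: b.
  by have [r0 rg] := box i; case: b {box} r0 rg; case: c; rewrite ?oppr_le0.
- by rewrite subr_le0; case: c; rewrite le_max lexx ?orbT.
Qed.

Lemma lp_obj_point u q r1 r2 : lp_obj (lp_point u q r1 r2) = energy u.
Proof. by rewrite primal_energyE. Qed.

Lemma energy_le_lp_obj z : (forall k, lp_ineq k z <= 0) -> energy (u_of z) <= lp_obj z.
Proof.
move=> /lp_ineq_sound [_ _ t_ge p_ge]; rewrite primal_energyE /lp_obj.
apply: lerD; first (apply: lerD => //; apply: ler_sum => i _).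
  rewrite /TVw ler_wpM2l ?invr_ge0 ?ler0n //.
  by apply: ler_sum => x _; apply: ler_sum => y _; apply: ler_wpM2l.
by rewrite ler_wpM2l ?pen_weight_ge0 //; apply: ler_sum => i _; apply: ler_sum => b _.
Qed.

Lemma lp_sound z : (forall k, lp_ineq k z <= 0) -> (forall k, lp_gap_row k z <= 0) ->
  [/\ in_Bprime (u_of z), size_admissible Sl Su g (u_of z),
      dual_feas g (q_of z) (rho_of z false) (rho_of z true) &
      energy (u_of z) <= dual (q_of z) (rho_of z false) (rho_of z true)].
Proof.
move=> ineq gap; have [uB feas _ _] := lp_ineq_sound ineq; split=> //.
  rewrite /size_admissible; case E: g => // i.
  have := gap (inr (i, false)); have := gap (inr (i, true)).
  by rewrite /= /hard_size E !mul1r /size_excess !subr_le0 => -> ->.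
have [s <-] := dual_obj_attained (q_of z) (rho_of z false) (rho_of z true).
by apply: le_trans (energy_le_lp_obj ineq) _; rewrite -subr_le0; apply: (gap (inl s)).
Qed.

Lemma size_admissible_point :
  exists u0 : 'I_n -> V -> R, in_Bprime u0 /\ forall i b, size_excess b i (usize (u0 i)) <= 0.
Proof.
case/andP: hV => SlV VSu; have SlSu i : (Sl i)%:R <= (Su i)%:R :> R by rewrite ler_nat.
have [V0|V_gt0] := posnP #|V|.
  exists (fun _ _ => 0); split=> [x|i b]; first by move: (card0_eq V0 x); rewrite !inE.
  rewrite /usize big1 // /size_excess; case: b; rewrite ?sub0r ?oppr_le0 // subr0 lern0.
  by rewrite -leqn0 -V0 (leq_trans _ SlV) // (bigD1 i) //= leq_addr.
pose N : R := #|V|%:R; have N_gt0 : 0 < N by rewrite ltr0n.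
have [|th [/andP [th0 th1] thE]] := @convex_interpolation R (\sum_i Sl i)%:R (\sum_i Su i)%:R N.
  by rewrite !ler_nat SlV VSu.
exists (fun i _ => ((Sl i)%:R + th * ((Su i)%:R - (Sl i)%:R)) / N); split.
  apply: in_Bprime_of => [i x|x].
    by rewrite divr_ge0 ?ler0n ?addr_ge0 ?mulr_ge0 ?subr_ge0.
  rewrite -mulr_suml big_split /= -mulr_sumr sumrB -!natr_sum thE divff //.
  exact: lt0r_neq0.
move=> i b; rewrite /usize sumr_const -[X in size_excess _ _ X]mulr_natr -/N.
rewrite divfK ?lt0r_neq0 // /size_excess.
by have := SlSu i; case: b; nra.
Qed.

Lemma Elag_mix (J : finType) (lam : J -> R) (uu : J -> 'I_n -> V -> R) q r1 r2 :
  \sum_j lam j != 0 ->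
  \sum_j lam j * lag (uu j) q r1 r2 =
  (\sum_j lam j) * lag (fun i x => (\sum_j lam j)^-1 * \sum_j lam j * uu j i x) q r1 r2.
Proof.
set L := \sum_j lam j => L_neq0; rewrite /Elag.
under eq_bigr do rewrite mulrDr.
rewrite big_split /= -mulr_suml mulrDr; congr (_ + _).
have -> : L * (\sum_i \sum_x L^-1 * (\sum_j lam j * uu j i x) * coef w C q r1 r2 i x) =
    \sum_i \sum_x (\sum_j lam j * uu j i x) * coef w C q r1 r2 i x.
  rewrite mulr_sumr; apply: eq_bigr => i _; rewrite mulr_sumr; apply: eq_bigr => x _.
  by rewrite !mulrA mulfV // mul1r.
under eq_bigr do rewrite mulr_sumr.
rewrite exchange_big /=; apply: eq_bigr => i _.
under eq_bigr do rewrite mulr_sumr.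
rewrite exchange_big /=; apply: eq_bigr => x _.
by rewrite mulr_suml; apply: eq_bigr => j _; rewrite mulrA.
Qed.

Lemma sum_lp_gap_rows (lam : {ffun V -> 'I_n} + 'I_n * bool -> R) z :
  \sum_k lam k * lp_gap_row k z =
  \sum_s lam (inl s) *
    (lp_obj z - lag (label_indicator s) (q_of z) (rho_of z false) (rho_of z true)) +
  hard_size * \sum_i \sum_(b : bool) lam (inr (i, b)) * size_excess b i (usize (u_of z i)).
Proof.
rewrite big_sumType /=; congr (_ + _).
rewrite (eq_bigr (fun p => lam (inr (p.1, p.2)) * lp_gap_row (inr (p.1, p.2)) z)); last by case.
rewrite -(pair_big xpredT xpredT (fun i b => lam (inr (i, b)) * lp_gap_row (inr (i, b)) z)) /=.
by rewrite mulr_sumr; apply: eq_bigr => i _; rewrite !big_bool /=; ring.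
Qed.

Lemma hard_size_ge0 : 0 <= hard_size.
Proof. by rewrite /hard_size; case: g. Qed.

Lemma pos_part_mul (c e : R) : (if 0 < e then c else 0) * e = c * Num.max e 0.
Proof. by case: ltP; rewrite ?mul0r ?mulr0. Qed.

Lemma in_Bprime_mix (J : finType) (lam : J -> R) (uu : J -> 'I_n -> V -> R) :
  (forall j, 0 <= lam j) -> 0 < \sum_j lam j -> (forall j, in_Bprime (uu j)) ->
  in_Bprime (fun i x => (\sum_j lam j)^-1 * \sum_j lam j * uu j i x).
Proof.
move=> lam0 L_gt0 uuB; apply: in_Bprime_of => [i x|x].
  rewrite mulr_ge0 ?invr_ge0 ?(ltW L_gt0) //; apply: sumr_ge0 => j _.
  by rewrite mulr_ge0 //; case/andP: ((uuB j x).1 i).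
rewrite -mulr_sumr exchange_big /= [X in _ * X](eq_bigr lam) ?mulVf ?lt0r_neq0 // => j _.
by rewrite -mulr_sumr (uuB j x).2 mulr1.
Qed.

Lemma lp_gap_comb_null (lam : {ffun V -> 'I_n} + 'I_n * bool -> R) :
  (forall k, 0 <= lam k) -> \sum_s lam (inl s) = 0 ->
  exists z, (forall k, lp_ineq k z <= 0) /\ \sum_k lam k * lp_gap_row k z <= 0.
Proof.
move=> lam0 L0; have [u0 [u0B u0adm]] := size_admissible_point.
exists (lp_point u0 (fun _ _ _ => 0) (fun _ => 0) (fun _ => 0)).
split; first exact: lp_point_ineq u0B dual_feas0.
rewrite sum_lp_gap_rows big1 ?add0r => [|s _]; last by rewrite (psumr_eq0P _ L0) ?mul0r.
rewrite mulr_ge0_le0 ?hard_size_ge0 //; apply: sumr_le0 => i _; apply: sumr_le0 => b _.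
exact: mulr_ge0_le0.
Qed.

Lemma lp_gap_comb_pos (lam : {ffun V -> 'I_n} + 'I_n * bool -> R) :
  (forall k, 0 <= lam k) -> 0 < \sum_s lam (inl s) ->
  exists z, (forall k, lp_ineq k z <= 0) /\ \sum_k lam k * lp_gap_row k z <= 0.
Proof.
set L := \sum_s lam (inl s) => lam0 L_gt0.
(* [ub] is the average of the labelings weighted by [lam]; the multipliers
   [rr] are a subgradient of the size penalty at [ub], shifted by [lam]. *)
pose ub i x := L^-1 * \sum_s lam (inl s) * label_indicator s i x.
pose rr b i := (if 0 < size_excess b i (usize (ub i)) then pen_weight else 0) +
  hard_size * (lam (inr (i, b)) / L).
have box b : in_box g (rr b).
  move=> i; have lamL : 0 <= lam (inr (i, b)) / L by rewrite divr_ge0 // ltW.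
  rewrite /rr /hard_size /pen_weight; move: hg; case: g => [|c|] //= c_gt0.
  - by rewrite mul0r addr0 if_same.
  - by rewrite mul0r addr0; case: ifP; rewrite ?lexx ?(ltW c_gt0).
  - by rewrite mul1r if_same add0r.
set z := lp_point ub (fun i => tv_sign (ub i)) (rr false) (rr true).
exists z; split.
  apply: lp_point_ineq; first exact: in_Bprime_mix label_indicator_Bprime.
  split; last by split; apply: box.
  by move=> i x y; rewrite /tv_sign; case: ifP; rewrite ?normrN normr1.
rewrite sum_lp_gap_rows; set A := \sum_i _.
under eq_bigr do rewrite mulrBr.
rewrite sumrB -mulr_suml -/L Elag_mix ?lt0r_neq0 // -/L -/ub lp_obj_point.
have -> : lag ub (q_of z) (rho_of z false) (rho_of z true) = energy ub + hard_size / L * A.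
  rewrite Elag_decomp primal_energyE -!addrA; congr (_ + (_ + _)).
    by apply: eq_bigr => i _; apply: sum_mul_divw_tv_sign.
  rewrite /A !mulr_sumr -big_split; apply: eq_bigr => i _.
  rewrite !mulr_sumr -big_split; apply: eq_bigr => b _.
  by rewrite /rho_of /z /=; case: b; rewrite /rr mulrDl pos_part_mul; ring.
suff -> : L * energy ub - L * (energy ub + hard_size / L * A) + hard_size * A = 0 by [].
by field; rewrite lt0r_neq0.
Qed.

Lemma lp_gap_comb_solvable (lam : {ffun V -> 'I_n} + 'I_n * bool -> R) :
  (forall k, 0 <= lam k) ->
  exists z, (forall k, lp_ineq k z <= 0) /\ \sum_k lam k * lp_gap_row k z <= 0.
Proof.
move=> lam0; have : 0 <= \sum_s lam (inl s) by apply: sumr_ge0 => s _.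
rewrite le_eqVlt => /orP [/eqP L0|L_gt0]; first exact: lp_gap_comb_null.
exact: lp_gap_comb_pos.
Qed.

Lemma strong_duality : exists u q r1 r2,
  [/\ in_Bprime u, size_admissible Sl Su g u, dual_feas g q r1 r2 & energy u <= dual q r1 r2].
Proof.
have [z [ineq gap]] := affine_alternative lp_gap_row_affine lp_ineq_affine lp_gap_comb_solvable.
by exists (u_of z), (q_of z), (rho_of z false), (rho_of z true); apply: lp_sound.
Qed.

End Relaxation.

Theorem theorem2 (R : realType) (V : finType) (n : nat)
  (w : V -> V -> R) (C : 'I_n -> V -> R) (Sl Su : 'I_n -> nat) (g : gam R) :
  (2 <= n)%N ->
  (forall x y, w x y = w y x) ->
  (forall x y, 0 <= w x y) ->
  (forall i, (Sl i <= Su i)%N) ->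
  (\sum_(i < n) Sl i <= #|V| <= \sum_(i < n) Su i)%N ->
  gam_ok g ->
  (exists q r1 r2, dual_max w C Sl Su g q r1 r2) /\
  forall q r1 r2, dual_max w C Sl Su g q r1 r2 ->
    (exists u, relaxed_min w C Sl Su g u /\ primal_dual_pair w C Sl Su g u q r1 r2) /\
    forall u, relaxed_min w C Sl Su g u -> primal_dual_pair w C Sl Su g u q r1 r2 ->
      (forall x, \sum_(i in Iargmin w C q r1 r2 x) u i x = 1 /\
                 (forall j, j \notin Iargmin w C q r1 r2 x -> u j x = 0)) /\
      (forall x i0, Iargmin w C q r1 r2 x = [set i0] ->
                    u i0 x = 1 /\ (forall i, i != i0 -> u i x = 0)) /\
      ((forall x, exists i0, Iargmin w C q r1 r2 x = [set i0]) ->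
       binary_min w C Sl Su g u).
Proof.
move=> n_ge2 wsym wpos hS hV hg; have n_gt0 : (0 < n)%N := ltnW n_ge2.
have [u0 [q0 [r10 [r20 [u0B u0adm feas0 gap0]]]]] :=
  strong_duality C wsym wpos hS n_gt0 hV hg.
split.
  exists q0, r10, r20; split=> // q r1 r2 feas.
  exact: le_trans (weak_duality C wsym wpos hS u0B u0adm feas) gap0.
move=> q r1 r2 [feas dual_opt]; split.
  exists u0; apply: zero_gap_optimal => //.
  exact: le_trans gap0 (dual_opt _ _ _ feas0).
move=> u u_min pair; have [uB _] := u_min.
have support := primal_dual_pair_support n_gt0 pair.
have single x i0 : Iargmin w C q r1 r2 x = [set i0] ->
    u i0 x = 1 /\ (forall i, i != i0 -> u i x = 0).
  move=> Ix; have off j : j != i0 -> u j x = 0 by move=> ?; apply: support; rewrite Ix in_set1.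
  by split=> //; apply: point_support.
split=> [x|]; first by split; [exact: sum_support uB (support x) | apply: support].
split=> // singletons; apply: binary_min_of_relaxed_min => //.
by apply: in_B_of_point_support => // x; have [i0 /single []] := singletons x; exists i0.
Qed.
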